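(* For every $U\in U(4)$ there exist $U_1,U_2,U_3,U_4,U_5,U_6\in U(2)$ such that $$U=(U_1\otimes U_2)\,\cdot\,\mathtt{botCNOT}\,\cdot\,\begin{pmatrix}\mathbf{1}&0\\0&U_3\end{pmatrix}\,\cdot\,(\mathbf{1}\otimes U_4)\,\cdot\,\mathtt{botCNOT}\,\cdot\,(U_5\otimes U_6),$$ where $\begin{pmatrix}\mathbf{1}&0\\0&U_3\end{pmatrix}$ is the $4\times4$ block-diagonal matrix with $2\times 2$ blocks $\mathbf{1}$ and $U_3$.
   Context: $U(n)$ is the group of $n\times n$ unitary matrices, $\mathbf{1}$ the $2\times 2$ identity, $\otimes$ the Kronecker product with respect to the ordered basis $|00\rangle,|01\rangle,|10\rangle,|11\rangle$, and $\cdot$ the matrix product. $\mathtt{botCNOT}$ is the permutation matrix $\begin{pmatrix}1&0&0&0\\0&0&0&1\\0&0&1&0\\0&1&0&0\end{pmatrix}$ (swapping $|01\rangle\leftrightarrow|11\rangle$). *)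

From HB Require Import structures.
From mathcomp Require Import all_boot all_order all_algebra.
From mathcomp.real_closed Require Import complex mxtens.
Set Implicit Arguments. Unset Strict Implicit. Unset Printing Implicit Defensive.
Import GRing.Theory.
Local Open Scope ring_scope.
Local Open Scope complex_scope.

Definition adjmx (R : rcfType) (n : nat) (A : 'M[R[i]]_n) : 'M[R[i]]_n :=
  (map_mx (@conjc R) A)^T.

Definition unitary (R : rcfType) (n : nat) (A : 'M[R[i]]_n) : Prop :=
  A *m adjmx A = 1%:M /\ adjmx A *m A = 1%:M.

(* Kronecker product of two 2x2 matrices w.r.t. ordered basis |00>,|01>,|10>,|11>:
   (A (x) B)_{2a+b, 2c+d} = A_{a,c} B_{b,d}  (mathcomp's tensmx). *)
Definition kron2 (R : rcfType) (A B : 'M[R[i]]_2) : 'M[R[i]]_4 := tensmx A B.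

(* botCNOT: permutation matrix swapping |01> <-> |11> (indices 1 and 3). *)
Definition botCNOT (R : rcfType) : 'M[R[i]]_4 :=
  \matrix_(i < 4, j < 4)
    (if ((i : nat) == 0%N) || ((i : nat) == 2%N) then ((i : nat) == j)%:R
     else (((i : nat) + (j : nat) == 4%N) && ((i : nat) != j))%:R).

Definition ctrlU (R : rcfType) (U : 'M[R[i]]_2) : 'M[R[i]]_4 :=
  block_mx (1%:M : 'M[R[i]]_2) 0 0 U.

(* The spin flip v |-> (sigma_y (x) sigma_y) conj(v) is antiunitary, and the last column of a
   local unitary A (x) B with A, B in SU(2) is minus the flip of its first column.  A plane
   spanned by two flip-eigenvectors contains a product vector (a quadratic equation in the
   pencil), so it is spanned by the first and last columns of such an A (x) B.
   The unitary gamma(U) = sflip U^T sflip U is inverted by the flip; hence it has two independent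
   flip-fixed eigenvectors w1, w2, and U maps them to flip-eigenvectors.  With local unitaries
   R and L adapted to the planes <w1, w2> and <U w1, U w2>, the unitary L^* U R preserves
   <|00>, |11>>, so conjugating it by botCNOT gives a block-diagonal unitary diag(A, B), which
   equals diag(1, B A^* ) (1 (x) A). *)

From HB Require Import structures.
From mathcomp Require Import all_boot all_order all_algebra.
From mathcomp.real_closed Require Import complex mxtens.
From mathcomp Require Import reals.
From mathcomp Require Import ring.
Set Implicit Arguments. Unset Strict Implicit. Unset Printing Implicit Defensive.
Import GRing.Theory Num.Theory.
Local Open Scope ring_scope.

(* [qab] is the index of the basis vector |ab>. *)
Definition q0 : 'I_2 := @Ordinal 2 0 isT.
Definition q1 : 'I_2 := @Ordinal 2 1 isT.
Definition q00 : 'I_4 := @Ordinal 4 0 isT.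
Definition q01 : 'I_4 := @Ordinal 4 1 isT.
Definition q10 : 'I_4 := @Ordinal 4 2 isT.
Definition q11 : 'I_4 := @Ordinal 4 3 isT.

Lemma ord2_cases (i : 'I_2) : i = q0 \/ i = q1.
Proof. by case: i => [[|[|//]] ?]; [left | right]; apply: val_inj. Qed.

Lemma ord4_cases (i : 'I_4) : [\/ i = q00, i = q01, i = q10 | i = q11].
Proof.
by case: i => [[|[|[|[|//]]]] ?]; [apply: Or41 | apply: Or42 | apply: Or43 | apply: Or44];
  apply: val_inj.
Qed.

Lemma sum_ord2 (V : nmodType) (F : 'I_2 -> V) : \sum_(k < 2) F k = F q0 + F q1.
Proof. by rewrite !big_ord_recr big_ord0 /= add0r; congr (F _ + F _); apply: val_inj. Qed.

Lemma sum_ord4 (V : nmodType) (F : 'I_4 -> V) :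
  \sum_(k < 4) F k = F q00 + F q01 + F q10 + F q11.
Proof.
by rewrite !big_ord_recr big_ord0 /= add0r; congr (F _ + F _ + F _ + F _); apply: val_inj.
Qed.

Ltac case_ord i :=
  match type of i with
  | ordinal 4 => case: (ord4_cases i) => ->
  | ordinal 2 => case: (ord2_cases i) => ->
  | ordinal 1 => rewrite ?(ord1 i)
  end.

Ltac entrywise :=
  apply/matrixP; let i := fresh "i" in let j := fresh "j" in move=> i j;
  rewrite ?(mxE, sum_ord4, sum_ord2); case_ord i; case_ord j; rewrite /=.

Section TwoQubit.
Variable R : realType.
Local Notation C := R[i].
Local Open Scope sesquilinear_scope.
Import Num.Def.

Lemma adjmxE n (A : 'M[C]_n) : adjmx A = A^t*.
Proof. by rewrite /adjmx map_trmx. Qed.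

Lemma mulmx_rcancel m n (X : 'M[C]_(m, n)) (A B : 'M[C]_n) :
  A *m B = 1%:M -> X *m A *m B = X.
Proof. by move=> AB1; rewrite -mulmxA AB1 mulmx1. Qed.

Lemma adj_unitarymx_mul n (A : 'M[C]_n) : A \is unitarymx -> A^t* *m A = 1%:M.
Proof. by move=> /unitarymxP /mulmx1C. Qed.

Lemma unitaryP n (A : 'M[C]_n) : reflect (unitary A) (A \is unitarymx).
Proof.
rewrite /unitary adjmxE; apply: (iffP idP) => [A_unitary | [/unitarymxP //]].
by split; [apply/unitarymxP | apply: adj_unitarymx_mul].
Qed.

Lemma mulmx_adj_eq0 m n (X : 'M[C]_(m, n)) : X *m X^t* = 0 -> X = 0.
Proof.
move=> /matrixP XX0; apply/matrixP => i k; rewrite mxE.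
have : \sum_l X i l * (X i l)^* = (X *m X^t*) i i.
  by rewrite mxE; apply: eq_bigr => l _; rewrite !mxE.
rewrite XX0 mxE => /(psumr_eq0P (fun l _ => mul_conjC_ge0 (X i l))) /(_ k isT) /eqP.
by rewrite mul_conjC_eq0 => /eqP.
Qed.

Lemma unitary_block_triu m n (A : 'M[C]_m) (X : 'M[C]_(m, n)) (B : 'M[C]_n) :
  block_mx A X 0 B \is unitarymx -> [/\ X = 0, A \is unitarymx & B \is unitarymx].
Proof.
move=> W_unitary; have := adj_unitarymx_mul W_unitary; move/unitarymxP: W_unitary.
rewrite tr_block_mx map_block_mx !mulmx_block !(scalar_mx_block m n).
move=> /eq_block_mx [AX1 _ _ B1] /eq_block_mx [A1 _ _ _].
move: A1 AX1 B1; rewrite ?trmx0 ?map_mx0 ?mul0mx ?mulmx0 ?addr0 ?add0r => A1 AX1 B1.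
have A_unitary : A \is unitarymx by apply/unitarymxP; apply: mulmx1C.
move: AX1; rewrite (unitarymxP A_unitary) => /(canRL (addKr 1%:M)).
rewrite addNr => /mulmx_adj_eq0 X0.
by split=> //; apply/unitarymxP.
Qed.

Definition qhi (i : 'I_4) : 'I_2 := if (val i < 2)%N then q0 else q1.
Definition qlo (i : 'I_4) : 'I_2 := if odd (val i) then q1 else q0.

Lemma kron2E (A B : 'M[C]_2) :
  kron2 A B = \matrix_(i, j) (A (qhi i) (qhi j) * B (qlo i) (qlo j)).
Proof.
apply/matrixP => i j; rewrite /kron2 /tensmx !mxE.
by case_ord i; case_ord j; congr (A _ _ * B _ _); apply: val_inj.
Qed.

Lemma kron2_adj (A B : 'M[C]_2) : (kron2 A B)^t* = kron2 (A^t*) (B^t*).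
Proof. by rewrite !kron2E; entrywise; rewrite rmorphM. Qed.

Lemma kron2_mul (A B A' B' : 'M[C]_2) :
  kron2 A B *m kron2 A' B' = kron2 (A *m A') (B *m B').
Proof. exact (tensmx_mul A B A' B'). Qed.

Lemma kron2_1l (A : 'M[C]_2) : kron2 1%:M A = block_mx A 0 0 A.
Proof.
rewrite -[kron2 _ _ : 'M_(2 + 2)](@submxK _ 2 2 2 2) kron2E.
by f_equal; entrywise; rewrite ?(mul1r, mul0r).
Qed.

Lemma kron2_unitary (A B : 'M[C]_2) :
  A \is unitarymx -> B \is unitarymx -> kron2 A B \is unitarymx.
Proof.
move=> /unitarymxP AA1 /unitarymxP BB1; apply/unitarymxP.
by rewrite kron2_adj kron2_mul AA1 BB1 kron2_1l -scalar_mx_block.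
Qed.

Lemma botCNOT_unitary : botCNOT R \is unitarymx.
Proof. by apply/unitarymxP; entrywise; rewrite ?(rmorph0, rmorph1); ring. Qed.

Lemma botCNOTK : botCNOT R *m botCNOT R = 1%:M.
Proof. by entrywise; ring. Qed.

Definition free2 n (u v : 'cV[C]_n) := forall s t, s *: u + t *: v = 0 -> s = 0 /\ t = 0.

Definition in_span2 n (u v w : 'cV[C]_n) := exists s t, w = s *: u + t *: v.

Lemma free2_mul_unitary n (U : 'M[C]_n) u v :
  U \is unitarymx -> free2 u v -> free2 (U *m u) (U *m v).
Proof.
move=> /adj_unitarymx_mul UU1 free_uv s t /(congr1 (mulmx (U^t*))).
by rewrite mulmx0 mulmxDr -!scalemxAr !mulmxA UU1 !mul1mx => /free_uv.
Qed.

Lemma free2_col_unitary n (M : 'M[C]_n) i j :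
  M \is unitarymx -> i != j -> free2 (col i M) (col j M).
Proof.
move=> /adj_unitarymx_mul MM1 ij s t /(congr1 (mulmx (M^t*))).
rewrite mulmx0 mulmxDr -!scalemxAr !colE !mulmxA MM1 !mul1mx => /matrixP st0.
have ji : j != i by rewrite eq_sym.
move: (st0 i 0) (st0 j 0); rewrite !mxE !eqxx (negPf ij) (negPf ji) /=.
by rewrite !mulr1 !mulr0 addr0 add0r.
Qed.

Lemma free2_eigen n (K : 'M[C]_n) u v (a b : C) :
  u != 0 -> v != 0 -> K *m u = a *: u -> K *m v = b *: v -> a != b -> free2 u v.
Proof.
move=> u_neq0 v_neq0 Ku Kv ab s t st0.
have su : s *: u = - (t *: v) by apply/eqP; rewrite -addr_eq0 st0.
have : K *m (s *: u) = a *: (s *: u) by rewrite -scalemxAr Ku !scalerA mulrC.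
rewrite su mulmxN -scalemxAr Kv scalerN => /oppr_inj /eqP.
rewrite !scalerA -subr_eq0 -scalerBl scalemx_eq0 (negPf v_neq0) orbF.
rewrite [a * t]mulrC -mulrBr mulf_eq0 subr_eq0 (eq_sym b) (negPf ab) orbF => /eqP t0.
split=> //; move: su; rewrite t0 scale0r oppr0 => /eqP.
by rewrite scalemx_eq0 (negPf u_neq0) orbF => /eqP.
Qed.

Lemma in_span2l n (u v : 'cV[C]_n) : in_span2 u v u.
Proof. by exists 1, 0; rewrite scale1r scale0r addr0. Qed.

Lemma in_span2r n (u v : 'cV[C]_n) : in_span2 u v v.
Proof. by exists 0, 1; rewrite scale1r scale0r add0r. Qed.

Lemma in_span2_mul m n (M : 'M[C]_(m, n)) u v w :
  in_span2 u v w -> in_span2 (M *m u) (M *m v) (M *m w).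
Proof. by move=> [s [t ->]]; exists s, t; rewrite mulmxDr -!scalemxAr. Qed.

Lemma in_span2_trans n (u v g h w : 'cV[C]_n) :
  in_span2 u v g -> in_span2 u v h -> in_span2 g h w -> in_span2 u v w.
Proof.
move=> [a [b ->]] [c [d ->]] [s [t ->]].
exists (s * a + t * c), (s * b + t * d).
by rewrite !scalerDr !scalerA !scalerDl addrACA.
Qed.

Lemma in_span2_exchange n (u v g h : 'cV[C]_n) :
  free2 g h -> in_span2 u v g -> in_span2 u v h -> in_span2 g h u /\ in_span2 g h v.
Proof.
move=> free_gh [a [b g_eq]] [c [d h_eq]].
pose D := a * d - b * c.
have Du : d *: g + (- b) *: h = D *: u.
  by apply/matrixP => i j; rewrite g_eq h_eq !mxE /D; ring.
have Dv : (- c) *: g + a *: h = D *: v.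
  by apply/matrixP => i j; rewrite g_eq h_eq !mxE /D; ring.
have D_neq0 : D != 0.
  apply/eqP => D0; move: Du Dv; rewrite D0 !scale0r => /free_gh [_ /eqP].
  rewrite oppr_eq0 => /eqP b0 /free_gh [_ a0].
  suff /free_gh [/eqP] : 1 *: g + 0 *: h = 0 by rewrite oner_eq0.
  by rewrite g_eq a0 b0 !scale0r !addr0 scaler0.
split.
  exists (d / D), (- b / D); apply: (scalerI D_neq0).
  by rewrite -Du scalerDr !scalerA ![D * _]mulrC !divfK.
exists (- c / D), (a / D); apply: (scalerI D_neq0).
by rewrite -Dv scalerDr !scalerA ![D * _]mulrC !divfK.
Qed.

Lemma span2_eq n (u v g h : 'cV[C]_n) :
  free2 g h -> in_span2 u v g -> in_span2 u v h ->
  forall w, in_span2 u v w <-> in_span2 g h w.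
Proof.
move=> free_gh ug uh w; have [gu gv] := in_span2_exchange free_gh ug uh.
by split; apply: in_span2_trans.
Qed.

Lemma in_span2_cols_unitary n (L : 'M[C]_n) i j k w :
  L \is unitarymx -> in_span2 (col i L) (col j L) w -> k != i -> k != j ->
  (L^t* *m w) k 0 = 0.
Proof.
move=> /adj_unitarymx_mul LL1 [s [t ->]] ki kj.
rewrite mulmxDr -!scalemxAr !colE !mulmxA LL1 !mul1mx !mxE.
by rewrite (negPf ki) (negPf kj) !mulr0 addr0.
Qed.

(* sigma_y (x) sigma_y *)
Definition sflip : 'M[C]_4 := \matrix_(i, j)
  match val i, val j with 0, 3 => -1 | 1, 2 => 1 | 2, 1 => 1 | 3, 0 => -1 | _, _ => 0 end.

Definition flip (v : 'cV[C]_4) : 'cV[C]_4 := sflip *m map_mx conjC v.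

Lemma sflipK : sflip *m sflip = 1%:M.
Proof. by entrywise; ring. Qed.

Lemma conj_sflip : map_mx conjC sflip = sflip.
Proof. by entrywise; rewrite ?(rmorph0, rmorphN, rmorph1). Qed.

Lemma sflip_unitary : sflip \is unitarymx.
Proof.
have sflip_sym : sflip^T = sflip by entrywise.
by apply/unitarymxP; rewrite -map_trmx conj_sflip sflip_sym sflipK.
Qed.

Lemma flipK : involutive flip.
Proof. by move=> v; rewrite /flip map_mxM conj_sflip map_mxCK mulmxA sflipK mul1mx. Qed.

Lemma flipD u v : flip (u + v) = flip u + flip v.
Proof. by rewrite /flip map_mxD mulmxDr. Qed.

Lemma flipZ (c : C) v : flip (c *: v) = c^* *: flip v.
Proof. by rewrite /flip map_mxZ -scalemxAr. Qed.

Lemma flipN v : flip (- v) = - flip v.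
Proof. by rewrite -scaleN1r flipZ rmorphN1 scaleN1r. Qed.

Lemma flipN_in_span2 u v w (c d : C) :
  flip u = c *: u -> flip v = d *: v -> in_span2 u v w -> in_span2 u v (- flip w).
Proof.
move=> fu fv [s [t ->]]; exists (- (s^* * c)), (- (t^* * d)).
by rewrite flipD !flipZ fu fv !scalerA opprD !scaleNr.
Qed.

(* If v + flip v = 0 then v - flip v = 2 v, so flip_part v is nonzero whenever v is. *)
Definition flip_part v := if v + flip v == 0 then 'i *: (v - flip v) else v + flip v.

Lemma flip_partK v : flip (flip_part v) = flip_part v.
Proof.
rewrite /flip_part; case: ifP => _; last by rewrite flipD flipK addrC.
by rewrite flipZ flipD flipN flipK conjCi scaleNr -scalerN opprB.
Qed.

Lemma flip_part_neq0 v : v != 0 -> flip_part v != 0.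
Proof.
move=> v_neq0; rewrite /flip_part; case: ifP => [/eqP vfv0 | /negbT //].
have -> : v - flip v = 2%:R *: v.
  rewrite scaler_nat mulr2n; congr (v + _).
  by apply/eqP; rewrite eqr_oppLR -addr_eq0 addrC vfv0.
by rewrite !scalemx_eq0 negb_or neq0Ci pnatr_eq0 v_neq0.
Qed.

Section FlipInverted.
Variable K : 'M[C]_4.
Hypothesis K_sflip : K *m sflip *m map_mx conjC K = sflip.

(* K_sflip says flip K flip = K^-1, so flip maps the d-eigenspace of K to its
   (d^* )^-1-eigenspace, which is the d-eigenspace when |d| = 1. *)
Lemma flip_eigen v (d : C) : K *m v = d *: v -> d * d^* = 1 -> K *m flip v = d *: flip v.
Proof.
move=> Kv dd1.
have Kv_conj : map_mx conjC K *m map_mx conjC v = d^* *: map_mx conjC v.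
  by rewrite -map_mxM Kv map_mxZ.
have fv_eq : flip v = d^* *: (K *m flip v).
  by rewrite {1}/flip -{1}K_sflip -mulmxA Kv_conj -scalemxAr mulmxA.
by rewrite {2}fv_eq scalerA dd1 scale1r.
Qed.

Lemma flip_part_eigen v (d : C) :
  K *m v = d *: v -> d * d^* = 1 -> K *m flip_part v = d *: flip_part v.
Proof.
move=> Kv dd1; have Kfv := flip_eigen Kv dd1.
rewrite /flip_part; case: ifP => _; last by rewrite mulmxDr Kv Kfv scalerDr.
by rewrite -scalemxAr mulmxBr Kv Kfv -scalerBr !scalerA mulrC.
Qed.
End FlipInverted.

Lemma unitary_eigenbasis n (K : 'M[C]_n) : K \is unitarymx ->
  exists (Q : 'M[C]_n) (d : 'rV[C]_n),
    [/\ Q \is unitarymx, K *m Q = Q *m diag_mx d & forall j, d 0 j * (d 0 j)^* = 1].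
Proof.
move=> K_unitary.
have K_normal : K \is normalmx.
  by apply/normalmxP; rewrite (unitarymxP K_unitary) adj_unitarymx_mul.
have P_unitary := spectral_unitarymx K.
move/orthomx_spectralP: K_normal; rewrite invmx_unitary //.
set P := spectralmx K; set d := spectral_diag K => K_eq.
exists (P^t*), d; split; first by rewrite trmxC_unitary.
  by rewrite {1}K_eq mulmxtVK.
have : diag_mx d \is unitarymx.
  have -> : diag_mx d = P *m K *m P^t*.
    by rewrite K_eq !mulmxA (unitarymxP P_unitary) mul1mx mulmxtVK.
  by rewrite !mul_unitarymx ?trmxC_unitary.
move=> /unitarymxP; rewrite tr_diag_mx map_diag_mx mulmx_diag => /matrixP dd1 j.
by move: (dd1 j j); rewrite !mxE eqxx mulr1n.
Qed.

Lemma col_unitary_neq0 n (Q : 'M[C]_n) j : Q \is unitarymx -> col j Q != 0.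
Proof.
move=> /adj_unitarymx_mul QQ1; apply: contra_neq (@oner_neq0 C) => Qj0.
have : col j (Q^t* *m Q) = 0 by rewrite !colE -mulmxA -colE Qj0 mulmx0.
by rewrite QQ1 col1 => /matrixP /(_ j 0); rewrite !mxE !eqxx.
Qed.

Definition phi_minus : 'cV[C]_4 := \col_i match val i with 0 => 1 | 3 => -1 | _ => 0 end.
Definition psi_plus : 'cV[C]_4 := \col_i match val i with 1 | 2 => 1 | _ => 0 end.

Lemma flip_phi_minus : flip phi_minus = phi_minus.
Proof. by rewrite /flip; entrywise; rewrite ?(rmorph0, rmorphN, rmorph1); ring. Qed.

Lemma flip_psi_plus : flip psi_plus = psi_plus.
Proof. by rewrite /flip; entrywise; rewrite ?(rmorph0, rmorphN, rmorph1); ring. Qed.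

Lemma free2_bell : free2 phi_minus psi_plus.
Proof.
move=> s t /matrixP st0; move: (st0 q00 0) (st0 q01 0); rewrite !mxE /=.
by rewrite !(mulr1, mulr0, addr0, add0r).
Qed.

Lemma flip_fixed_eigenvectors (K : 'M[C]_4) :
  K \is unitarymx -> K *m sflip *m map_mx conjC K = sflip ->
  exists w1 w2 (l1 l2 : C), [/\ free2 w1 w2, flip w1 = w1, flip w2 = w2,
                               K *m w1 = l1 *: w1 & K *m w2 = l2 *: w2].
Proof.
move=> K_unitary K_sflip.
have [Q [d [Q_unitary KQ d_unit]]] := unitary_eigenbasis K_unitary.
have Q_eigen j : K *m col j Q = d 0 j *: col j Q.
  rewrite !colE mulmxA KQ mul_mx_diag -!colE.
  by apply/matrixP => i k; rewrite !mxE mulrC.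
have [j dj | d_const] := pickP (fun j => d 0 j != d 0 q00).
  exists (flip_part (col q00 Q)), (flip_part (col j Q)), (d 0 q00), (d 0 j).
  have eigen k := flip_part_eigen K_sflip (Q_eigen k) (d_unit k).
  split; rewrite ?flip_partK ?eigen //.
  have part_neq0 k : flip_part (col k Q) != 0 by apply/flip_part_neq0/col_unitary_neq0.
  by apply: (free2_eigen (part_neq0 q00) (part_neq0 j) (eigen q00) (eigen j)); rewrite eq_sym.
have d_scalar : diag_mx d = (d 0 q00)%:M.
  by apply/matrixP => i k; rewrite !mxE; move/negbFE/eqP: (d_const i) => ->.
have K_scalar : K = (d 0 q00)%:M.
  rewrite -(mulmxtVK K Q_unitary) KQ d_scalar mul_mx_scalar -scalemxAl.
  by rewrite (unitarymxP Q_unitary) scalemx1.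
exists phi_minus, psi_plus, (d 0 q00), (d 0 q00).
by rewrite K_scalar !mul_scalar_mx flip_phi_minus flip_psi_plus; split=> //; exact: free2_bell.
Qed.

Section Gamma.
Variable U : 'M[C]_4.
Hypothesis U_unitary : U \is unitarymx.

(* A variant of the invariant gamma(u) = u (sigma_y (x) sigma_y) u^T (sigma_y (x) sigma_y)
   of Shende, Bullock and Markov. *)
Definition gamma := sflip *m U^T *m sflip *m U.

Let conjU := map_mx conjC U.

Let conjU_trU : conjU *m U^T = 1%:M.
Proof. by move: (congr1 trmx (unitarymxP U_unitary)); rewrite trmx_mul -map_trmx trmxK trmx1. Qed.

Let trU_conjU : U^T *m conjU = 1%:M.
Proof.
by move: (congr1 trmx (adj_unitarymx_mul U_unitary)); rewrite trmx_mul -map_trmx trmxK trmx1.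
Qed.

Lemma gamma_unitary : gamma \is unitarymx.
Proof. by rewrite !mul_unitarymx ?sflip_unitary ?trmx_unitary. Qed.

Lemma gamma_sflip : gamma *m sflip *m map_mx conjC gamma = sflip.
Proof.
rewrite /gamma !map_mxM conj_sflip !mulmxA.
rewrite (mulmx_rcancel _ sflipK) (mulmx_rcancel _ (unitarymxP U_unitary)).
by rewrite (mulmx_rcancel _ sflipK) (mulmx_rcancel _ trU_conjU).
Qed.

Lemma gamma_factor : sflip *m conjU *m sflip *m gamma = U.
Proof.
rewrite /gamma !mulmxA (mulmx_rcancel _ sflipK) (mulmx_rcancel _ conjU_trU).
by rewrite sflipK mul1mx.
Qed.

Lemma flip_mul_gamma w (l : C) :
  flip w = w -> gamma *m w = l *: w -> flip (U *m w) = l^* *: (U *m w).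
Proof.
move=> fw gw.
have Uw : U *m w = l *: flip (U *m w).
  rewrite -{1}gamma_factor -mulmxA gw -scalemxAr; congr (_ *: _).
  by rewrite -{1}fw /flip map_mxM !mulmxA (mulmx_rcancel _ sflipK).
by rewrite {1}Uw flipZ flipK.
Qed.

Lemma flip_eigen_pair_image : exists w1 w2 (c1 c2 : C),
  [/\ free2 w1 w2, flip w1 = w1, flip w2 = w2,
      flip (U *m w1) = c1 *: (U *m w1) & flip (U *m w2) = c2 *: (U *m w2)].
Proof.
have [w1 [w2 [l1 [l2 [free_w fw1 fw2 gw1 gw2]]]]] :=
  flip_fixed_eigenvectors gamma_unitary gamma_sflip.
by exists w1, w2, l1^*, l2^*; split=> //; apply: flip_mul_gamma.
Qed.
End Gamma.

Definition prodvec (a0 a1 b0 b1 : C) : 'cV[C]_4 :=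
  \col_i match val i with 0 => a0 * b0 | 1 => a0 * b1 | 2 => a1 * b0 | _ => a1 * b1 end.

(* The determinant of the coefficient matrix of x, which vanishes exactly on product vectors. *)
Definition prod_det (x : 'cV[C]_4) := x q00 0 * x q11 0 - x q01 0 * x q10 0.

Lemma prod_det_pencil_root (g h : 'cV[C]_4) :
  exists s t : C, ((s != 0) || (t != 0)) /\ prod_det (s *: g + t *: h) = 0.
Proof.
pose E := g q00 0 * h q11 0 + h q00 0 * g q11 0 - g q01 0 * h q10 0 - h q01 0 * g q10 0.
have pencil s t : prod_det (s *: g + t *: h) =
    s ^+ 2 * prod_det g + s * t * E + t ^+ 2 * prod_det h.
  by rewrite /prod_det /E !mxE; ring.
have [Dh0 | Dh_neq0] := eqVneq (prod_det h) 0.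
  by exists 0, 1; rewrite oner_eq0 orbT pencil Dh0; split=> //; ring.
pose r := sqrtC (E ^+ 2 - 4%:R * prod_det g * prod_det h).
exists 1, ((- E + r) / (2%:R * prod_det h)); rewrite oner_eq0 pencil; split=> //.
have Dh4_neq0 : 4%:R * prod_det h != 0 by rewrite mulf_neq0 // pnatr_eq0.
apply: (mulfI Dh4_neq0); rewrite mulr0.
transitivity (r ^+ 2 - (E ^+ 2 - 4%:R * prod_det g * prod_det h)); first by field.
by rewrite sqrtCK subrr.
Qed.

Lemma prod_det_eq0_prodvec (x : 'cV[C]_4) : x != 0 -> prod_det x = 0 ->
  exists a0 a1 b0 b1 : C,
    [/\ (a0 != 0) || (a1 != 0), (b0 != 0) || (b1 != 0) & x = prodvec a0 a1 b0 b1].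
Proof.
rewrite /prod_det => x_neq0 /eqP; rewrite subr_eq0 => /eqP det0.
have [x00 | x00_neq0] := eqVneq (x q00 0) 0; last first.
  exists (x q00 0), (x q10 0), 1, (x q01 0 / x q00 0).
  rewrite x00_neq0 oner_eq0; split=> //; entrywise; [ring | field | ring |] => //.
  by apply: (mulfI x00_neq0); rewrite det0; field.
have [x01 | x01_neq0] := eqVneq (x q01 0) 0.
  exists 0, 1, (x q10 0), (x q11 0); rewrite oner_eq0 orbT; split=> //.
    apply: contraNT x_neq0 => /norP [/negPn /eqP x10 /negPn /eqP x11].
    by apply/eqP; entrywise; rewrite ?(x00, x01, x10, x11).
  by entrywise; rewrite ?(x00, x01); ring.
have x10 : x q10 0 = 0.
  by move/eqP: det0; rewrite x00 mul0r eq_sym mulf_eq0 (negPf x01_neq0) => /eqP.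
exists (x q01 0), (x q11 0), 0, 1; rewrite x01_neq0 oner_eq0 orbT; split=> //.
by entrywise; rewrite ?(x00, x10); ring.
Qed.

Lemma normalize2 (a0 a1 : C) : (a0 != 0) || (a1 != 0) ->
  exists nu : C, nu != 0 /\ (a0 / nu) * (a0 / nu)^* + (a1 / nu) * (a1 / nu)^* = 1.
Proof.
move=> a_neq0; pose n := a0 * a0^* + a1 * a1^*.
have n_neq0 : n != 0 by rewrite paddr_eq0 ?mul_conjC_ge0 // !mul_conjC_eq0 negb_and.
have nu_real : (sqrtC n)^* = sqrtC n.
  by apply/conj_Creal/ger0_real; rewrite sqrtC_ge0 addr_ge0 ?mul_conjC_ge0.
have nu2 : sqrtC n ^+ 2 = n by rewrite sqrtCK.
have nu_neq0 : sqrtC n != 0 by apply: contra n_neq0 => /eqP nu0; rewrite -nu2 nu0 expr0n.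
exists (sqrtC n); split=> //; rewrite !rmorphM !fmorphV /= nu_real.
transitivity (n / sqrtC n ^+ 2); first by rewrite /n; field.
by rewrite nu2 divff.
Qed.

Definition su2 (a0 a1 : C) : 'M[C]_2 := \matrix_(i, j)
  match val i, val j with 0, 0 => a0 | 1, 0 => a1 | 0, _ => - a1^* | _, _ => a0^* end.

Lemma su2_unitary (a0 a1 : C) : a0 * a0^* + a1 * a1^* = 1 -> su2 a0 a1 \is unitarymx.
Proof.
move=> a_unit; apply/unitarymxP; entrywise; rewrite ?rmorphN /= ?conjCK.
all: by rewrite -?a_unit; ring.
Qed.

Lemma col0_kron_su2 (a0 a1 b0 b1 : C) :
  col q00 (kron2 (su2 a0 a1) (su2 b0 b1)) = prodvec a0 a1 b0 b1.
Proof. by rewrite kron2E; entrywise. Qed.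

Lemma col3_kron_su2 (a0 a1 b0 b1 : C) :
  col q11 (kron2 (su2 a0 a1) (su2 b0 b1)) = - flip (prodvec a0 a1 b0 b1).
Proof. by rewrite kron2E /flip; entrywise; rewrite ?(rmorphM, rmorphN); ring. Qed.

Lemma kron_plane_of_flip_eigen (g h : 'cV[C]_4) (c d : C) :
  free2 g h -> flip g = c *: g -> flip h = d *: h ->
  exists A B : 'M[C]_2, [/\ A \is unitarymx, B \is unitarymx &
    forall w, in_span2 g h w <-> in_span2 (col q00 (kron2 A B)) (col q11 (kron2 A B)) w].
Proof.
move=> free_gh fg fh.
have [s [t [st_neq0 det0]]] := prod_det_pencil_root g h.
have x_neq0 : s *: g + t *: h != 0.
  by apply: contraTneq st_neq0 => /free_gh [-> ->]; rewrite eqxx.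
have [a0 [a1 [b0 [b1 [a_neq0 b_neq0 x_eq]]]]] := prod_det_eq0_prodvec x_neq0 det0.
have [nu [nu_neq0 a_unit]] := normalize2 a_neq0.
have [mu [mu_neq0 b_unit]] := normalize2 b_neq0.
exists (su2 (a0 / nu) (a1 / nu)), (su2 (b0 / mu) (b1 / mu)).
rewrite !su2_unitary //; split=> //; set M := kron2 _ _.
have M_unitary : M \is unitarymx by rewrite kron2_unitary ?su2_unitary.
have col0_in : in_span2 g h (col q00 M).
  have -> : col q00 M = (nu * mu)^-1 *: (s *: g + t *: h).
    by rewrite col0_kron_su2 x_eq; entrywise; field; rewrite ?(nu_neq0, mu_neq0).
  by exists ((nu * mu)^-1 * s), ((nu * mu)^-1 * t); rewrite scalerDr !scalerA.
apply: span2_eq => //; first by apply: free2_col_unitary.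
by rewrite col3_kron_su2 -col0_kron_su2; apply: flipN_in_span2 fg fh col0_in.
Qed.

Lemma kron2_1l_ctrlU (A B : 'M[C]_2) :
  A \is unitarymx -> block_mx A 0 0 B = ctrlU (B *m A^t*) *m kron2 1%:M A.
Proof.
move=> A_unitary; rewrite kron2_1l /ctrlU (@mulmx_block _ 2 2 2 2 2 2).
by rewrite !(mul0mx, mulmx0, addr0, add0r, mul1mx) (mulmx_rcancel _ (adj_unitarymx_mul _)).
Qed.

Lemma cnot_block_factor (V : 'M[C]_4) : V \is unitarymx ->
  V q01 q00 = 0 -> V q10 q00 = 0 -> V q01 q11 = 0 -> V q10 q11 = 0 ->
  exists U3 U4 : 'M[C]_2, [/\ U3 \is unitarymx, U4 \is unitarymx &
    V = botCNOT R *m ctrlU U3 *m kron2 1%:M U4 *m botCNOT R].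
Proof.
move=> V_unitary V10 V20 V13 V23.
pose W : 'M[C]_(2 + 2) := botCNOT R *m V *m botCNOT R.
have W_unitary : W \is unitarymx by rewrite !mul_unitarymx ?botCNOT_unitary.
have W_triu : W = block_mx (ulsubmx W) (ursubmx W) 0 (drsubmx W).
  rewrite -{1}[W]submxK; congr block_mx.
  by entrywise; rewrite ?(V10, V20, V13, V23); ring.
move: W_unitary; rewrite {1}W_triu => /unitary_block_triu [Wur0 Wul_unitary Wdr_unitary].
rewrite Wur0 in W_triu.
exists (drsubmx W *m (ulsubmx W)^t*), (ulsubmx W).
rewrite mul_unitarymx ?trmxC_unitary //; split=> //.
rewrite -(mulmxA (botCNOT R) (ctrlU _)) -kron2_1l_ctrlU // -W_triu /W !mulmxA.
by rewrite botCNOTK mul1mx (mulmx_rcancel _ botCNOTK).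
Qed.
End TwoQubit.

Unset Implicit Arguments.
Local Open Scope sesquilinear_scope.

Theorem proposition3 (R : realType) (U : 'M[R[i]]_4) :
  unitary U ->
  exists U1 U2 U3 U4 U5 U6 : 'M[R[i]]_2,
    (unitary U1 /\ unitary U2 /\ unitary U3 /\ unitary U4 /\ unitary U5 /\ unitary U6) /\
    U = kron2 U1 U2 *m botCNOT R *m ctrlU U3 *m kron2 1%:M U4 *m botCNOT R
          *m kron2 U5 U6.
Proof.
move=> /unitaryP U_unitary.
have [w1 [w2 [c1 [c2 [free_w fw1 fw2 fUw1 fUw2]]]]] := flip_eigen_pair_image U_unitary.
have [A [B [A_unitary B_unitary span_w]]] := kron_plane_of_flip_eigen free_w
  (etrans fw1 (esym (scale1r w1))) (etrans fw2 (esym (scale1r w2))).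
have [A' [B' [A'_unitary B'_unitary span_Uw]]] :=
  kron_plane_of_flip_eigen (free2_mul_unitary U_unitary free_w) fUw1 fUw2.
set Rm := kron2 A B in span_w *; set L := kron2 A' B' in span_Uw *.
have L_unitary : L \is unitarymx by rewrite kron2_unitary.
have Rm_unitary : Rm \is unitarymx by rewrite kron2_unitary.
have V_zero j k : in_span2 (col q00 Rm) (col q11 Rm) (col j Rm) -> k != q00 -> k != q11 ->
    (L^t* *m U *m Rm) k j = 0.
  move=> /span_w /(in_span2_mul U) /span_Uw /(in_span2_cols_unitary L_unitary) V_kj k0 k3.
  by move: (V_kj k k0 k3); rewrite colE !mulmxA -colE mxE.
have V_unitary : L^t* *m U *m Rm \is unitarymx by rewrite !mul_unitarymx ?trmxC_unitary.
have [U3 [U4 [U3_unitary U4_unitary V_eq]]] := cnot_block_factor V_unitary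
  (V_zero q00 q01 (in_span2l _ _) isT isT) (V_zero q00 q10 (in_span2l _ _) isT isT)
  (V_zero q11 q01 (in_span2r _ _) isT isT) (V_zero q11 q10 (in_span2r _ _) isT isT).
exists A', B', U3, U4, (A^t*), (B^t*); split.
  by rewrite !(rwP (unitaryP _)) !trmxC_unitary.
have -> : U = L *m (L^t* *m U *m Rm) *m Rm^t*.
  by rewrite !mulmxA (unitarymxP L_unitary) mul1mx mulmxtVK.
by rewrite V_eq kron2_adj !mulmxA.
Qed.
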